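(* (a) For every integer $i\ge 1$ and every integer $m\ge i+1$, $$d_i^2(m)\bigl(d_i^2(m)-d_i(m-1)d_i(m+1)\bigr)>d_i^2(m-1)\bigl(d_i^2(m+1)-d_i(m)d_i(m+2)\bigr).$$ (b) For $i=0$ the reverse strict inequality holds: for every integer $m\ge 1$, $$d_0^2(m)\bigl(d_0^2(m)-d_0(m-1)d_0(m+1)\bigr)<d_0^2(m-1)\bigl(d_0^2(m+1)-d_0(m)d_0(m+2)\bigr).$$
   Context: For integers $m\ge 0$ and $0\le i\le m$, the Boros–Moll numbers are $$d_i(m)=2^{-2m}\sum_{k=i}^{m}2^k\binom{2m-2k}{m-k}\binom{m+k}{k}\binom{k}{i}.$$ *)

From mathcomp Require Import all_boot all_order all_algebra.
Set Implicit Arguments. Unset Strict Implicit. Unset Printing Implicit Defensive.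
Import Order.TTheory GRing.Theory Num.Theory.
Local Open Scope ring_scope.

Definition bm (i m : nat) : rat :=
  (2%:R ^+ (2 * m))^-1 *
  \sum_(i <= k < m.+1)
     (2 ^ k * 'C(2 * m - 2 * k, m - k) * 'C(m + k, k) * 'C(k, i))%:R.

(* By creative telescoping, d_i(m) satisfies a three-term recurrence in m.
   For i >= 1, induction along the recurrence bounds the ratio
   d_i(m+1)/d_i(m) below by an explicit rational function of i and m, which
   is attained at m = i.  Write d_i(m+1) as this bound plus a nonnegative
   excess s; the recurrence then expresses both sides of (a) through
   d_i(m-1), s, i and m, and their difference becomes a positive multiple of
   a polynomial in d_i(m-1), s, i - 1 and m - i whose coefficients are all
   nonnegative, with a positive coefficient of d_i(m-1)^4.  For i = 0 the
   recurrence collapses to d_0(m+1)/d_0(m) = (4m+3)/(2m+2), and (b) is a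
   direct computation. *)

From mathcomp Require Import all_boot all_order all_algebra.
From mathcomp Require Import ring lra zify.

Set Implicit Arguments.
Unset Strict Implicit.
Unset Printing Implicit Defensive.
Import Order.TTheory GRing.Theory Num.Theory.
Local Open Scope ring_scope.

Ltac push_natr :=
  repeat (first [rewrite natrD | rewrite natrM | rewrite natrX | rewrite -natr1]).

Lemma natr_eq_div (a b x y : nat) : (0 < a)%N -> (a * x = b * y)%N ->
  x%:R = b%:R / a%:R * y%:R :> rat.
Proof.
move=> a_gt0 eq_ab; have a_neq0 : (a%:R : rat) != 0 by rewrite pnatr_eq0 -lt0n.
apply: (mulfI a_neq0); rewrite -natrM eq_ab natrM; field; exact: a_neq0.
Qed.

Lemma bin_central_ratio (n : nat) : ('C(2 * n + 2, n + 1))%:R =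
  2%:R * (2%:R * n%:R + 1) / (n%:R + 1) * ('C(2 * n, n))%:R :> rat.
Proof.
have h1 := mul_bin_diag (2 * n + 2) n.
rewrite (_ : ((2 * n + 2).-1 = (2 * n).+1)%N) in h1; last lia.
have h2 := mul_bin_down (2 * n).+1 n.
rewrite (_ : ((2 * n).+1 - n = n.+1)%N) in h2; last lia.
rewrite (_ : ((2 * n).+1.-1 = 2 * n)%N) in h2; last lia.
rewrite [(n + 1)%N]addn1 (natr_eq_div _ (esym h1)) //.
rewrite (natr_eq_div _ (esym h2)) // !natrD ?natrM -!natr1 /=.
field; apply: lt0r_neq0; have := ler0n rat n; lra.
Qed.

Lemma bin_addSn_ratio (M k : nat) : ('C(M.+1 + k, k))%:R =
  (M%:R + 1 + k%:R) / (M%:R + 1) * ('C(M + k, k))%:R :> rat.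
Proof.
have h := mul_bin_down (M.+1 + k) k.
rewrite (_ : (M.+1 + k - k = M.+1)%N) in h; last lia.
rewrite (_ : ((M.+1 + k).-1 = M + k)%N) in h; last lia.
rewrite (natr_eq_div _ (esym h)) //; push_natr.
field; apply: lt0r_neq0; have := ler0n rat M; lra.
Qed.

Lemma binSS_ratio (n k : nat) : ('C(n.+1, k.+1))%:R =
  (n%:R + 1) / (k%:R + 1) * ('C(n, k))%:R :> rat.
Proof.
rewrite (natr_eq_div _ (esym (mul_bin_diag n.+1 k))) //; push_natr.
field; apply: lt0r_neq0; have := ler0n rat k; lra.
Qed.

Lemma binS_ratio (k i : nat) : (i <= k)%N -> ('C(k.+1, i))%:R =
  (k%:R + 1) / (k%:R + 1 - i%:R) * ('C(k, i))%:R :> rat.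
Proof.
move=> le_ik.
rewrite (natr_eq_div _ (esym (mul_bin_down k.+1 i))); last lia.
rewrite natrB; last lia.
push_natr; field; have : (i%:R <= k%:R :> rat) by rewrite ler_nat.
move=> ?; apply: lt0r_neq0; lra.
Qed.

Definition bm_term (i m k : nat) : rat :=
  (2 ^ k * 'C(2 * m - 2 * k, m - k) * 'C(m + k, k) * 'C(k, i))%:R.

Definition bm_sum (i m : nat) : rat := \sum_(i <= k < m.+1) bm_term i m k.

Lemma bmE (i m : nat) : bm i m = (2%:R ^+ (2 * m))^-1 * bm_sum i m.
Proof. by []. Qed.

Lemma bm_gt0 (i m : nat) : (i <= m)%N -> 0 < bm i m.
Proof.
move=> le_im; rewrite bmE /bm_sum (big_nat_recr m) //.
apply: mulr_gt0; first by rewrite invr_gt0 exprn_gt0 // ltr0n.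
apply: ltr_pwDr; last by apply: sumr_ge0 => k _; rewrite /bm_term ler0n.
rewrite /bm_term ltr0n !muln_gt0 expn_gt0 !bin_gt0 /=.
apply/andP; split; [apply/andP; split|]; lia.
Qed.

Lemma bm_diag_succ (i : nat) : 2%:R * (i%:R + 1) * bm i i.+1 =
  (2%:R * i%:R + 1) * (2%:R * i%:R + 3%:R) * bm i i.
Proof.
rewrite !bmE /bm_sum (big_nat_recr i.+1) // !big_nat1 /bm_term /=.
have -> : ('C(2 * i.+1 - 2 * i, i.+1 - i) = 2)%N.
  rewrite (_ : (2 * i.+1 - 2 * i = 2)%N); last lia.
  by rewrite (_ : (i.+1 - i = 1)%N) ?bin1; last lia.
rewrite !subnn !bin0.
have h := mul_bin_down (2 * i + 1) i.
rewrite (_ : (2 * i + 1 - i = i.+1)%N) in h; last lia.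
rewrite (_ : ((2 * i + 1).-1 = 2 * i)%N) in h; last lia.
rewrite (_ : 'C(i.+1 + i, i) = 'C(2 * i + 1, i)); last by f_equal; lia.
rewrite (_ : 'C(i.+1 + i.+1, i.+1) = 'C(2 * i + 2, i + 1)); last by f_equal; lia.
rewrite (_ : 'C(i + i, i) = 'C(2 * i, i)); last by f_equal; lia.
rewrite binn binSn !natrM !natrX bin_central_ratio (natr_eq_div _ (esym h)) //.
rewrite (_ : (2 * i.+1 = (2 * i).+2)%N); last lia.
rewrite !exprS (_ : (2%:R : rat) ^+ (2 * i) = (2%:R ^+ i) ^+ 2); last by rewrite -exprM mulnC.
have pow2_neq0 : (2%:R ^+ i : rat) != 0 by apply: expf_neq0; rewrite pnatr_eq0.
push_natr; field.
have := ler0n rat i => ?.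
by repeat (apply/andP; split); try (apply: lt0r_neq0; lra); rewrite ?pow2_neq0.
Qed.

Definition rec_c2 (M I : rat) : rat := 4%:R * (M + 1) * (M + 2%:R) * (M + 2%:R - I).
Definition rec_c1 (M I : rat) : rat :=
  2%:R * (M + 1) * (8%:R * M ^+ 2 + 24%:R * M + 19%:R - 4%:R * I ^+ 2).
Definition rec_c0 (M I : rat) : rat :=
  (4%:R * M + 3%:R) * (4%:R * M + 5%:R) * (M + 1 + I).

(* Zeilberger certificate of the recurrence [bm_rec]. *)
Definition cert_num (M I K : rat) : rat :=
  64%:R - 112%:R*K + 64%:R*K^+2 + 64%:R*I + 32%:R*I*K - 32%:R*I*K^+2 + 256%:R*M
  - 328%:R*M*K + 128%:R*M*K^+2 + 192%:R*M*I + 48%:R*M*I*K - 48%:R*M*I*K^+2 + 400%:R*M^+2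
  - 360%:R*M^+2*K + 80%:R*M^+2*K^+2 + 208%:R*M^+2*I + 16%:R*M^+2*I*K - 16%:R*M^+2*I*K^+2
  + 304%:R*M^+3 - 176%:R*M^+3*K + 16%:R*M^+3*K^+2 + 96%:R*M^+3*I + 112%:R*M^+4
  - 32%:R*M^+4*K + 16%:R*M^+4*I + 16%:R*M^+5.

Definition cert (M I K : rat) : rat :=
  (K - I) * cert_num M I K / ((2%:R * M + 3%:R - 2%:R * K) * (M + K + 1) * (M + K + 2%:R)).

Definition cert_term (i m k : nat) : rat := cert m%:R i%:R k%:R * bm_term i m.+2 k.

Lemma bm_term_telescoping (i m k : nat) : (i <= k)%N -> (k <= m)%N ->
  rec_c2 m%:R i%:R * bm_term i m.+2 k - 4%:R * rec_c1 m%:R i%:R * bm_term i m.+1 k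
   + 16%:R * rec_c0 m%:R i%:R * bm_term i m k = cert_term i m k.+1 - cert_term i m k.
Proof.
move=> le_ik le_km; have [n ->] : exists n, m = (k + n)%N by exists (m - k)%N; lia.
rewrite /cert_term /bm_term.
rewrite (_ : 'C(2 * (k + n).+2 - 2 * k, (k + n).+2 - k) = 'C(2 * n.+1 + 2, n.+1 + 1));
  last by f_equal; lia.
rewrite (_ : 'C(2 * (k + n).+1 - 2 * k, (k + n).+1 - k) = 'C(2 * n + 2, n + 1));
  last by f_equal; lia.
rewrite (_ : 'C(2 * (k + n) - 2 * k, (k + n) - k) = 'C(2 * n, n)); last by f_equal; lia.
rewrite (_ : 'C(2 * (k + n).+2 - 2 * k.+1, (k + n).+2 - k.+1) = 'C(2 * n + 2, n + 1));
  last by f_equal; lia.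
rewrite !natrM !natrX bin_central_ratio (_ : 'C(2 * n.+1, n.+1) = 'C(2 * n + 2, n + 1));
  last by f_equal; lia.
rewrite bin_central_ratio addnS binSS_ratio !bin_addSn_ratio (binS_ratio le_ik) exprS.
push_natr; rewrite /rec_c2 /rec_c1 /rec_c0 /cert /cert_num; field.
have := ler0n rat k; have := ler0n rat n.
have : (i%:R <= k%:R :> rat) by rewrite ler_nat.
by move=> *; repeat (apply/andP; split); apply: lt0r_neq0; lra.
Qed.

Lemma cert_term_bottom (i m : nat) : cert_term i m i = 0.
Proof. by rewrite /cert_term /cert subrr !mul0r. Qed.

Lemma cert_term_top (i m : nat) : (i <= m.+1)%N ->
  cert_term i m m.+1 + rec_c2 m%:R i%:R * (bm_term i m.+2 m.+1 + bm_term i m.+2 m.+2)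
   - 4%:R * rec_c1 m%:R i%:R * bm_term i m.+1 m.+1 = 0.
Proof.
move=> le_im; rewrite /cert_term /bm_term.
have -> : ('C(2 * m.+2 - 2 * m.+1, m.+2 - m.+1) = 2)%N.
  rewrite (_ : (2 * m.+2 - 2 * m.+1 = 2)%N); last lia.
  by rewrite (_ : (m.+2 - m.+1 = 1)%N) ?bin1; last lia.
rewrite !subnn !bin0.
have h := mul_bin_down (2 * m + 3) m.+1.
rewrite (_ : (2 * m + 3 - m.+1 = m.+2)%N) in h; last lia.
rewrite (_ : ((2 * m + 3).-1 = 2 * m + 2)%N) in h; last lia.
rewrite (_ : 'C(m.+2 + m.+1, m.+1) = 'C(2 * m + 3, m.+1)); last by f_equal; lia.
rewrite (_ : 'C(m.+2 + m.+2, m.+2) = 'C(2 * m.+1 + 2, m.+1 + 1)); last by f_equal; lia.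
rewrite (_ : 'C(m.+1 + m.+1, m.+1) = 'C(2 * m + 2, m.+1)); last by f_equal; lia.
rewrite !natrM !natrX !exprS bin_central_ratio.
rewrite (_ : 'C(2 * m.+1, m.+1) = 'C(2 * m + 2, m.+1)); last by f_equal; lia.
rewrite (natr_eq_div _ (esym h)) // (binS_ratio le_im).
push_natr; rewrite /rec_c2 /rec_c1 /cert /cert_num; field.
have := ler0n rat m.
have : (i%:R <= m%:R + 1 :> rat) by rewrite natr1 ler_nat.
by move=> *; repeat (apply/andP; split); apply: lt0r_neq0; lra.
Qed.

Lemma bm_sum_rec (i m : nat) : (i <= m)%N ->
  rec_c2 m%:R i%:R * bm_sum i m.+2 - 4%:R * rec_c1 m%:R i%:R * bm_sum i m.+1
   + 16%:R * rec_c0 m%:R i%:R * bm_sum i m = 0.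
Proof.
move=> le_im; have le_im1 := leqW le_im; have le_im2 := leqW le_im1.
have telescope : \sum_(i <= k < m.+1)
    (rec_c2 m%:R i%:R * bm_term i m.+2 k - 4%:R * rec_c1 m%:R i%:R * bm_term i m.+1 k
     + 16%:R * rec_c0 m%:R i%:R * bm_term i m k) = cert_term i m m.+1 - cert_term i m i.
  apply: telescope_sumr_eq => // k /andP [le_ik lt_km].
  exact: bm_term_telescoping.
rewrite cert_term_bottom subr0 !big_split /= sumrN -!mulr_sumr in telescope.
rewrite /bm_sum (big_nat_recr _ _ _ le_im2) !(big_nat_recr _ _ _ le_im1) /=.
apply: etrans (cert_term_top le_im1); rewrite -telescope; ring.
Qed.

Lemma bm_rec (i m : nat) : (i <= m)%N ->
  rec_c2 m%:R i%:R * bm i m.+2 = rec_c1 m%:R i%:R * bm i m.+1 - rec_c0 m%:R i%:R * bm i m.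
Proof.
move=> le_im; apply/eqP; rewrite -subr_eq0 !bmE; apply/eqP.
rewrite (_ : (2 * m.+2 = (2 * m).+4)%N); last lia.
rewrite (_ : (2 * m.+1 = (2 * m).+2)%N); last lia.
have pow2_neq0 : (2%:R ^+ (2 * m) : rat) != 0 by apply: expf_neq0; rewrite pnatr_eq0.
rewrite -[RHS](mulr0 ((2%:R ^+ (2 * m))^-1 / 16%:R)) -(bm_sum_rec le_im) !exprS.
by field; rewrite pow2_neq0.
Qed.

Ltac nonneg_poly := repeat match goal with
  | |- is_true (0 <= _ + _) => apply: addr_ge0
  | |- is_true (0 <= _ * _) => apply: mulr_ge0
  | |- is_true (0 <= _ ^+ _) => apply: exprn_ge0
  | |- is_true (0 <= _ %:R) => apply: ler0n
  | |- _ => assumption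
  end.

Ltac pos_poly := repeat match goal with
  | |- is_true (0 < _ + _) => apply: ltr_wpDr; first by nonneg_poly
  end; by rewrite ltr0n.

Definition lb_weight (I K : rat) : rat := I ^+ 2 + 2%:R * I + 2%:R * K.
Definition ratio_lb_num (I K : rat) : rat :=
  (4%:R * (I + K) ^+ 2 + 7%:R * (I + K) + I + 3%:R) * lb_weight I K + K * I ^+ 2.
Definition ratio_lb_den (I K : rat) : rat := 2%:R * (K + 1) * (I + K + 1) * lb_weight I K.

(* Nonnegativity of [lb_defect] is what propagates the ratio bound along the
   recurrence, via [ratio_bound_step]. *)
Definition lb_defect (I K : rat) : rat :=
  (rec_c1 (I + K) I * ratio_lb_num I K - rec_c0 (I + K) I * ratio_lb_den I K)
    * ratio_lb_den I (K + 1)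
  - rec_c2 (I + K) I * ratio_lb_num I K * ratio_lb_num I (K + 1).

Lemma lb_defect_expand (W K : rat) : lb_defect (W + 1) K =
   2160%:R + 9120%:R*K + 15004%:R*K^+2 + 12396%:R*K^+3 + 5476%:R*K^+4 + 1236%:R*K^+5 + 112%:R*K^+6 +
   8712%:R*W + 32932%:R*W*K + 48408%:R*W*K^+2 + 35348%:R*W*K^+3 + 13560%:R*W*K^+4 + 2592%:R*W*K^+5 +
   192%:R*W*K^+6 + 14376%:R*W^+2 + 48100%:R*W^+2*K + 61760%:R*W^+2*K^+2 + 38380%:R*W^+2*K^+3 +
   11984%:R*W^+2*K^+4 + 1720%:R*W^+2*K^+5 + 80%:R*W^+2*K^+6 + 12544%:R*W^+3 + 36640%:R*W^+3*K +
   39968%:R*W^+3*K^+2 + 20120%:R*W^+3*K^+3 + 4632%:R*W^+3*K^+4 + 384%:R*W^+3*K^+5 + 6240%:R*W^+4 +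
   15656%:R*W^+4*K + 14004%:R*W^+4*K^+2 + 5348%:R*W^+4*K^+3 + 780%:R*W^+4*K^+4 + 20%:R*W^+4*K^+5 +
   1768%:R*W^+5 + 3748%:R*W^+5*K + 2624%:R*W^+5*K^+2 + 692%:R*W^+5*K^+3 + 48%:R*W^+5*K^+4 +
   264%:R*W^+6 + 468%:R*W^+6*K + 240%:R*W^+6*K^+2 + 36%:R*W^+6*K^+3 + 16%:R*W^+7 + 24%:R*W^+7*K +
   8%:R*W^+7*K^+2.
Proof. by rewrite /lb_defect /ratio_lb_num /ratio_lb_den /lb_weight /rec_c2 /rec_c1 /rec_c0; ring. Qed.

Lemma ge1_eq_add1 (I : rat) : 1 <= I -> exists2 W, 0 <= W & I = W + 1.
Proof. by move=> ge1_I; exists (I - 1); [rewrite subr_ge0 | rewrite subrK]. Qed.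

Lemma lb_defect_ge0 (I K : rat) : 1 <= I -> 0 <= K -> 0 <= lb_defect I K.
Proof.
by move=> /ge1_eq_add1[W ge0_W ->] ge0_K; rewrite lb_defect_expand; nonneg_poly.
Qed.

Lemma rec_c2_gt0 (M I : rat) : 0 <= M -> I < M + 2%:R -> 0 < rec_c2 M I.
Proof.
move=> ge0_M lt_IM; rewrite /rec_c2.
by apply: mulr_gt0; [apply: mulr_gt0; [apply: mulr_gt0|]|]; lra.
Qed.

Lemma rec_c2_diag_gt0 (I K : rat) : 0 <= I -> 0 <= K -> 0 < rec_c2 (I + K) I.
Proof. by move=> ge0_I ge0_K; apply: rec_c2_gt0; lra. Qed.

Lemma rec_c0_gt0 (M I : rat) : 0 <= M -> 0 <= I -> 0 < rec_c0 M I.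
Proof. by move=> ge0_M ge0_I; rewrite /rec_c0; apply: mulr_gt0; [apply: mulr_gt0|]; lra. Qed.

Lemma lb_weight_gt0 (I K : rat) : 0 < I -> 0 <= K -> 0 < lb_weight I K.
Proof. by move=> gt0_I ge0_K; rewrite /lb_weight; have := exprn_ge0 2 (ltW gt0_I); lra. Qed.

Lemma ratio_lb_num_gt0 (I K : rat) : 0 < I -> 0 <= K -> 0 < ratio_lb_num I K.
Proof.
move=> gt0_I ge0_K; rewrite /ratio_lb_num; apply: ltr_wpDr; first exact/mulr_ge0/exprn_ge0/ltW.
apply: mulr_gt0; last exact: lb_weight_gt0.
by have := exprn_ge0 2 (addr_ge0 (ltW gt0_I) ge0_K); lra.
Qed.

Lemma ratio_lb_den_gt0 (I K : rat) : 0 < I -> 0 <= K -> 0 < ratio_lb_den I K.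
Proof.
move=> gt0_I ge0_K; rewrite /ratio_lb_den.
by apply: mulr_gt0; [apply: mulr_gt0; [apply: mulr_gt0|] | exact: lb_weight_gt0]; lra.
Qed.

Lemma ratio_bound_step (R : comPzRingType) (c2 c1 c0 lo hi lo' hi' b0 b1 b2 : R) :
  c2 * b2 = c1 * b1 - c0 * b0 ->
  lo * c2 * (hi' * b2 - lo' * b1)
  = b1 * ((c1 * lo - c0 * hi) * hi' - c2 * lo * lo') + hi' * c0 * (hi * b1 - lo * b0).
Proof.
move=> rec; transitivity (lo * hi' * (c2 * b2) - lo * c2 * lo' * b1); first by ring.
by rewrite rec; ring.
Qed.

Lemma bm_ratio_lb (i k : nat) : (0 < i)%N ->
  ratio_lb_num i%:R k%:R * bm i (i + k) <= ratio_lb_den i%:R k%:R * bm i (i + k).+1.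
Proof.
move=> i_gt0; have gt0_i : 0 < i%:R :> rat by rewrite ltr0n.
have ge0_i := ltW gt0_i; have ge1_i : 1 <= i%:R :> rat by rewrite ler1n.
elim: k => [|k IHk].
  rewrite addn0 le_eqVlt; apply/orP; left; apply/eqP.
  transitivity (lb_weight i%:R 0 * ((2%:R * i%:R + 1) * (2%:R * i%:R + 3%:R) * bm i i)).
    by rewrite /ratio_lb_num /lb_weight; ring.
  by rewrite -bm_diag_succ /ratio_lb_den /lb_weight; ring.
have ge0_k := ler0n rat k; have ge0_ik := addr_ge0 ge0_i ge0_k.
have c2_gt0 := rec_c2_diag_gt0 ge0_i ge0_k.
have lo_c2_gt0 := mulr_gt0 (ratio_lb_num_gt0 gt0_i ge0_k) c2_gt0.
have hi_c0_ge0 : 0 <= ratio_lb_den i%:R (k%:R + 1) * rec_c0 (i%:R + k%:R) i%:R.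
  exact/ltW/mulr_gt0/(rec_c0_gt0 ge0_ik ge0_i)/(ratio_lb_den_gt0 gt0_i (addr_ge0 ge0_k ler01)).
have rec := bm_rec (leq_addr k i); rewrite natrD in rec.
rewrite addnS -[k.+1%:R]natr1 -subr_ge0 -(pmulr_rge0 _ lo_c2_gt0).
rewrite (ratio_bound_step _ (ratio_lb_den i%:R k%:R) _ _ rec) -/(lb_defect _ _).
apply: addr_ge0; last by apply: mulr_ge0 hi_c0_ge0 _; rewrite subr_ge0.
exact: mulr_ge0 (ltW (bm_gt0 (leqW (leq_addr k i)))) (lb_defect_ge0 ge1_i ge0_k).
Qed.

(* For [s] the excess of [ratio_lb_den * d_i(n+1)] over [ratio_lb_num * d_i(n)],
   [turan_poly i (n - i) d_i(n) s] is a positive multiple of the difference of the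
   two sides of (a) at m = n + 1; see [turan_diff_reparam]. *)
Definition turan_poly (I K a s : rat) : rat :=
  let N := I + K in
  let B := ratio_lb_num I K * a + s in
  let C := rec_c1 N I * B - rec_c0 N I * ratio_lb_den I K * a in
  let E := rec_c1 (N + 1) I * C - rec_c0 (N + 1) I * rec_c2 N I * B in
  B ^+ 2 * (B ^+ 2 * rec_c2 N I ^+ 2 - a * C * ratio_lb_den I K * rec_c2 N I) * rec_c2 (N + 1) I
  - a ^+ 2 * ratio_lb_den I K ^+ 2 * (C ^+ 2 * rec_c2 (N + 1) I - B * E * rec_c2 N I).

Definition turan_coef0 (W K : rat) : rat :=
  238935453696%:R + 2140407825408%:R*K + 8998407272448%:R*K^+2 + 23593858785792%:R*K^+3 +
  43244693860608%:R*K^+4 + 58850598339648%:R*K^+5 + 61639053794432%:R*K^+6 +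
  50816764045376%:R*K^+7 + 33438066942976%:R*K^+8 + 17697417721984%:R*K^+9 +
  7553836349184%:R*K^+10 + 2594875313856%:R*K^+11 + 712299518080%:R*K^+12 + 154179881536%:R*K^+13 +
  25746199808%:R*K^+14 + 3201678848%:R*K^+15 + 279318528%:R*K^+16 + 15261696%:R*K^+17 +
  393216%:R*K^+18 + 2998430327808%:R*W + 25362600228864%:R*W*K + 100418325073920%:R*W*K^+2 +
  247245107205888%:R*W*K^+3 + 424145780662464%:R*W*K^+4 + 538232925140416%:R*W*K^+5 +
  523444164126272%:R*W*K^+6 + 398751535703616%:R*W*K^+7 + 241085625794880%:R*W*K^+8 +
  116470842859840%:R*W*K^+9 + 45027267346112%:R*W*K^+10 + 13879713357248%:R*W*K^+11 +
  3380296415744%:R*W*K^+12 + 640052716800%:R*W*K^+13 + 91824132096%:R*W*K^+14 +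
  9578350592%:R*W*K^+15 + 678019072%:R*W*K^+16 + 28606464%:R*W*K^+17 + 524288%:R*W*K^+18 +
  17738750794752%:R*W^+2 + 141359969836800%:R*W^+2*K + 525731754182400%:R*W^+2*K^+2 +
  1211834607093696%:R*W^+2*K^+3 + 1938822094950976%:R*W^+2*K^+4 + 2284528839463808%:R*W^+2*K^+5 +
  2052551085211968%:R*W^+2*K^+6 + 1435947836923648%:R*W^+2*K^+7 + 791687401324096%:R*W^+2*K^+8 +
  345819596931328%:R*W^+2*K^+9 + 119622856800576%:R*W^+2*K^+10 + 32560908107712%:R*W^+2*K^+11 +
  6883057444992%:R*W^+2*K^+12 + 1105024830848%:R*W^+2*K^+13 + 129911607296%:R*W^+2*K^+14 +
  10516275200%:R*W^+2*K^+15 + 521713664%:R*W^+2*K^+16 + 11886592%:R*W^+2*K^+17 +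
  65823405974784%:R*W^+3 + 493015443388416%:R*W^+3*K + 1717631573792064%:R*W^+3*K^+2 +
  3694810298271296%:R*W^+3*K^+3 + 5492546071477376%:R*W^+3*K^+4 + 5983003063758080%:R*W^+3*K^+5 +
  4939959890552064%:R*W^+3*K^+6 + 3153634875473536%:R*W^+3*K^+7 + 1573171972262912%:R*W^+3*K^+8 +
  615296396755328%:R*W^+3*K^+9 + 188085171061632%:R*W^+3*K^+10 + 44478040962560%:R*W^+3*K^+11 +
  7982957099136%:R*W^+3*K^+12 + 1053141069312%:R*W^+3*K^+13 + 96748084224%:R*W^+3*K^+14 +
  5607501824%:R*W^+3*K^+15 + 164814848%:R*W^+3*K^+16 + 1048576%:R*W^+3*K^+17 +
  171949307956992%:R*W^+4 + 1207455530842368%:R*W^+4*K + 3929283037991232%:R*W^+4*K^+2 +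
  7861223561848640%:R*W^+4*K^+3 + 10815194320348416%:R*W^+4*K^+4 + 10839888054293504%:R*W^+4*K^+5 +
  8178879424033920%:R*W^+4*K^+6 + 4732264122652736%:R*W^+4*K^+7 + 2118125969583872%:R*W^+4*K^+8 +
  734053792363200%:R*W^+4*K^+9 + 195651746778496%:R*W^+4*K^+10 + 39491359355136%:R*W^+4*K^+11 +
  5873478724224%:R*W^+4*K^+12 + 614579427072%:R*W^+4*K^+13 + 41702635776%:R*W^+4*K^+14 +
  1559108096%:R*W^+4*K^+15 + 20731904%:R*W^+4*K^+16 + 336422542987008%:R*W^+5 +
  2208949715511552%:R*W^+5*K + 6693446903038016%:R*W^+5*K^+2 + 12409671577280704%:R*W^+5*K^+3 +
  15732724728388288%:R*W^+5*K^+4 + 14435280725205184%:R*W^+5*K^+5 + 9892363628654400%:R*W^+5*K^+6 +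
  5149051726142784%:R*W^+5*K^+7 + 2048929171881344%:R*W^+5*K^+8 + 621897538115968%:R*W^+5*K^+9 +
  142366528071168%:R*W^+5*K^+10 + 24035169222016%:R*W^+5*K^+11 + 2878609002112%:R*W^+5*K^+12 +
  228749105408%:R*W^+5*K^+13 + 10647996416%:R*W^+5*K^+14 + 219928576%:R*W^+5*K^+15 +
  786432%:R*W^+5*K^+16 + 512042699881728%:R*W^+6 + 3134618214078720%:R*W^+6*K +
  8814640023840448%:R*W^+6*K^+2 + 15084257033067392%:R*W^+6*K^+3 + 17539762283940032%:R*W^+6*K^+4 +
  14649851257707904%:R*W^+6*K^+5 + 9056498849454016%:R*W^+6*K^+6 + 4205480768510784%:R*W^+6*K^+7 +
  1472320592312320%:R*W^+6*K^+8 + 386198403584896%:R*W^+6*K^+9 + 74605378271744%:R*W^+6*K^+10 +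
  10281731239424%:R*W^+6*K^+11 + 956926621568%:R*W^+6*K^+12 + 54547752064%:R*W^+6*K^+13 +
  1566747136%:R*W^+6*K^+14 + 13763584%:R*W^+6*K^+15 + 621562901934336%:R*W^+7 +
  3536522685931520%:R*W^+7*K + 9194820439234816%:R*W^+7*K^+2 + 14459893437249408%:R*W^+7*K^+3 +
  15340729596690560%:R*W^+7*K^+4 + 11590500976131840%:R*W^+7*K^+5 + 6414091312684928%:R*W^+7*K^+6 +
  2631875289330432%:R*W^+7*K^+7 + 800889694564992%:R*W^+7*K^+8 + 178702092221952%:R*W^+7*K^+9 +
  28514449332864%:R*W^+7*K^+10 + 3111550918656%:R*W^+7*K^+11 + 214765048192%:R*W^+7*K^+12 +
  8104351744%:R*W^+7*K^+13 + 121478144%:R*W^+7*K^+14 + 262144%:R*W^+7*K^+15 +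
  612032767390464%:R*W^+8 + 3225347531612416%:R*W^+8*K + 7721526052246912%:R*W^+8*K^+2 +
  11104308457840256%:R*W^+8*K^+3 + 10685155145614848%:R*W^+8*K^+4 + 7250216034185024%:R*W^+8*K^+5 +
  3559745975787264%:R*W^+8*K^+6 + 1276289653232192%:R*W^+8*K^+7 + 332722682114432%:R*W^+8*K^+8 +
  61942156143744%:R*W^+8*K^+9 + 7946424457088%:R*W^+8*K^+10 + 659603201088%:R*W^+8*K^+11 +
  31629154560%:R*W^+8*K^+12 + 698657984%:R*W^+8*K^+13 + 4034560%:R*W^+8*K^+14 +
  494517862161920%:R*W^+9 + 2404494113158656%:R*W^+9*K + 5275953850596224%:R*W^+9*K^+2 +
  6899665088342912%:R*W^+9*K^+3 + 5980908988795200%:R*W^+9*K^+4 + 3614111878922816%:R*W^+9*K^+5 +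
  1557852756142656%:R*W^+9*K^+6 + 481485858204864%:R*W^+9*K^+7 + 105628693304256%:R*W^+9*K^+8 +
  16008969189184%:R*W^+9*K^+9 + 1593340020032%:R*W^+9*K^+10 + 95127214784%:R*W^+9*K^+11 +
  2870522240%:R*W^+9*K^+12 + 29988864%:R*W^+9*K^+13 + 32768%:R*W^+9*K^+14 +
  330358742802944%:R*W^+10 + 1475674325758208%:R*W^+10*K + 2952091741158272%:R*W^+10*K^+2 +
  3488126636036800%:R*W^+10*K^+3 + 2702190377813696%:R*W^+10*K^+4 +
  1439694230956160%:R*W^+10*K^+5 + 537895022469952%:R*W^+10*K^+6 + 140925338210816%:R*W^+10*K^+7 +
  25428986916288%:R*W^+10*K^+8 + 3036731104640%:R*W^+10*K^+9 + 223046018240%:R*W^+10*K^+10 +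
  8798863936%:R*W^+10*K^+11 + 140976128%:R*W^+10*K^+12 + 437248%:R*W^+10*K^+13 +
  183265496593152%:R*W^+11 + 748370580993024%:R*W^+11*K + 1356668344805952%:R*W^+11*K^+2 +
  1437399886353984%:R*W^+11*K^+3 + 985691925489536%:R*W^+11*K^+4 + 457419076895488%:R*W^+11*K^+5 +
  145781480389760%:R*W^+11*K^+6 + 31683888559744%:R*W^+11*K^+7 + 4560747531136%:R*W^+11*K^+8 +
  409815876224%:R*W^+11*K^+9 + 20582147072%:R*W^+11*K^+10 + 463304704%:R*W^+11*K^+11 +
  2709504%:R*W^+11*K^+12 + 84557563062528%:R*W^+12 + 313884855493376%:R*W^+12*K +
  511964531587904%:R*W^+12*K^+2 + 481988236677184%:R*W^+12*K^+3 + 289174974656768%:R*W^+12*K^+4 +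
  115103973484928%:R*W^+12*K^+5 + 30650897478656%:R*W^+12*K^+6 + 5367396717376%:R*W^+12*K^+7 +
  590086370176%:R*W^+12*K^+8 + 37163559488%:R*W^+12*K^+9 + 1116719104%:R*W^+12*K^+10 +
  10293248%:R*W^+12*K^+11 + 32413911064320%:R*W^+13 + 108662748631296%:R*W^+13*K +
  158105855240256%:R*W^+13*K^+2 + 130794457852096%:R*W^+13*K^+3 + 67649583146304%:R*W^+13*K^+4 +
  22639645347136%:R*W^+13*K^+5 + 4897533599808%:R*W^+13*K^+6 + 662712941504%:R*W^+13*K^+7 +
  52004714368%:R*W^+13*K^+8 + 2023917568%:R*W^+13*K^+9 + 26689536%:R*W^+13*K^+10 +
  10283416362240%:R*W^+14 + 30892462968576%:R*W^+14*K + 39680163372736%:R*W^+14*K^+2 +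
  28440308219392%:R*W^+14*K^+3 + 12438735506496%:R*W^+14*K^+4 + 3405696850048%:R*W^+14*K^+5 +
  574692357056%:R*W^+14*K^+6 + 56277587392%:R*W^+14*K^+7 + 2791475200%:R*W^+14*K^+8 +
  49809408%:R*W^+14*K^+9 + 2681034313472%:R*W^+15 + 7150616525824%:R*W^+15*K +
  8002122110848%:R*W^+15*K^+2 + 4878223458304%:R*W^+15*K^+3 + 1757019608448%:R*W^+15*K^+4 +
  378284327680%:R*W^+15*K^+5 + 46699467520%:R*W^+15*K^+6 + 2938480640%:R*W^+15*K^+7 +
  68775936%:R*W^+15*K^+8 + 568099806464%:R*W^+16 + 1329983803136%:R*W^+16*K +
  1274711205376%:R*W^+16*K^+2 + 644391274496%:R*W^+16*K^+3 + 183892933888%:R*W^+16*K^+4 +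
  29232027904%:R*W^+16*K^+5 + 2348091392%:R*W^+16*K^+6 + 71110656%:R*W^+16*K^+7 +
  96238675968%:R*W^+17 + 194963021824%:R*W^+17*K + 156344529920%:R*W^+17*K^+2 +
  63152218112%:R*W^+17*K^+3 + 13424702464%:R*W^+17*K^+4 + 1403289600%:R*W^+17*K^+5 +
  55050240%:R*W^+17*K^+6 + 12718780416%:R*W^+18 + 21888825344%:R*W^+18*K +
  14196439040%:R*W^+18*K^+2 + 4317154304%:R*W^+18*K^+3 + 609875968%:R*W^+18*K^+4 +
  31517696%:R*W^+18*K^+5 + 1263046656%:R*W^+19 + 1801465856%:R*W^+19*K + 895035392%:R*W^+19*K^+2 +
  183402496%:R*W^+19*K^+3 + 12974080%:R*W^+19*K^+4 + 88621056%:R*W^+20 + 101154816%:R*W^+20*K +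
  34783232%:R*W^+20*K^+2 + 3637248%:R*W^+20*K^+3 + 3915776%:R*W^+21 + 3391488%:R*W^+21*K +
  622592%:R*W^+21*K^+2 + 81920%:R*W^+22 + 49152%:R*W^+22*K.

Definition turan_coef1 (W K : rat) : rat :=
  35501856768%:R + 273056126976%:R*K + 977232024576%:R*K^+2 + 2160515865600%:R*K^+3 +
  3303077505408%:R*K^+4 + 3703215294592%:R*K^+5 + 3149737489920%:R*K^+6 + 2073269592896%:R*K^+7 +
  1067379258240%:R*K^+8 + 431217586560%:R*K^+9 + 136243008384%:R*K^+10 + 33306538688%:R*K^+11 +
  6174941568%:R*K^+12 + 839093248%:R*K^+13 + 78787584%:R*K^+14 + 4564992%:R*K^+15 +
  122880%:R*K^+16 + 350720990208%:R*W + 2518942468608%:R*W*K + 8385695799552%:R*W*K^+2 +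
  17167683662208%:R*W*K^+3 + 24175366173440%:R*W*K^+4 + 24807236461184%:R*W*K^+5 +
  19164425510400%:R*W*K^+6 + 11350858041472%:R*W*K^+7 + 5197093545216%:R*W*K^+8 +
  1839520072832%:R*W*K^+9 + 499232551168%:R*W*K^+10 + 102017737984%:R*W*K^+11 +
  15194065920%:R*W*K^+12 + 1556879360%:R*W*K^+13 + 98125824%:R*W*K^+14 + 2867200%:R*W*K^+15 +
  1614103967232%:R*W^+2 + 10798706280960%:R*W^+2*K + 33343468453248%:R*W^+2*K^+2 +
  62995584746240%:R*W^+2*K^+3 + 81376619995904%:R*W^+2*K^+4 + 76053148766848%:R*W^+2*K^+5 +
  53046762268032%:R*W^+2*K^+6 + 28062840480256%:R*W^+2*K^+7 + 11320967020800%:R*W^+2*K^+8 +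
  3468607970240%:R*W^+2*K^+9 + 795631083264%:R*W^+2*K^+10 + 132845062080%:R*W^+2*K^+11 +
  15353700608%:R*W^+2*K^+12 + 1118051328%:R*W^+2*K^+13 + 41646080%:R*W^+2*K^+14 +
  368640%:R*W^+2*K^+15 + 4599004836096%:R*W^+3 + 28584880934016%:R*W^+3*K +
  81608606408704%:R*W^+3*K^+2 + 141758827086592%:R*W^+3*K^+3 + 167239464119296%:R*W^+3*K^+4 +
  141591431883008%:R*W^+3*K^+5 + 88582602087808%:R*W^+3*K^+6 + 41515175564032%:R*W^+3*K^+7 +
  14603369951872%:R*W^+3*K^+8 + 3820430139264%:R*W^+3*K^+9 + 726935865856%:R*W^+3*K^+10 +
  96509019648%:R*W^+3*K^+11 + 8287916032%:R*W^+3*K^+12 + 395497472%:R*W^+3*K^+13 +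
  7053312%:R*W^+3*K^+14 + 9092951246592%:R*W^+4 + 52355292670080%:R*W^+4*K +
  137733621830656%:R*W^+4*K^+2 + 219080044144960%:R*W^+4*K^+3 + 234891446636928%:R*W^+4*K^+4 +
  179087669559168%:R*W^+4*K^+5 + 99762208608256%:R*W^+4*K^+6 + 41040575604160%:R*W^+4*K^+7 +
  12439456273536%:R*W^+4*K^+8 + 2735070949312%:R*W^+4*K^+9 + 422213388160%:R*W^+4*K^+10 +
  43102238528%:R*W^+4*K^+11 + 2599064960%:R*W^+4*K^+12 + 72265216%:R*W^+4*K^+13 +
  410624%:R*W^+4*K^+14 + 13251405142272%:R*W^+5 + 70458304637568%:R*W^+5*K +
  170160924337408%:R*W^+5*K^+2 + 246726134426240%:R*W^+5*K^+3 + 239105668356864%:R*W^+5*K^+4 +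
  163077744839552%:R*W^+5*K^+5 + 80220652924800%:R*W^+5*K^+6 + 28664987581696%:R*W^+5*K^+7 +
  7384165868672%:R*W^+5*K^+8 + 1339149704576%:R*W^+5*K^+9 + 163233726208%:R*W^+5*K^+10 +
  12278345984%:R*W^+5*K^+11 + 480931840%:R*W^+5*K^+12 + 6426624%:R*W^+5*K^+13 +
  14756111229696%:R*W^+6 + 72200787150592%:R*W^+6*K + 159404596617344%:R*W^+6*K^+2 +
  209631375241984%:R*W^+6*K^+3 + 182503838622976%:R*W^+6*K^+4 + 110507164813632%:R*W^+6*K^+5 +
  47548567051136%:R*W^+6*K^+6 + 14577980820288%:R*W^+6*K^+7 + 3139927619072%:R*W^+6*K^+8 +
  459101150272%:R*W^+6*K^+9 + 42705403904%:R*W^+6*K^+10 + 2235457856%:R*W^+6*K^+11 +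
  50565120%:R*W^+6*K^+12 + 210432%:R*W^+6*K^+13 + 12842039418624%:R*W^+7 +
  57598428999680%:R*W^+7*K + 115705602559872%:R*W^+7*K^+2 + 137221362131200%:R*W^+7*K^+3 +
  106567090723968%:R*W^+7*K^+4 + 56786969590656%:R*W^+7*K^+5 + 21135442433408%:R*W^+7*K^+6 +
  5479430201600%:R*W^+7*K^+7 + 967422438272%:R*W^+7*K^+8 + 110829076608%:R*W^+7*K^+9 +
  7521297920%:R*W^+7*K^+10 + 252337152%:R*W^+7*K^+11 + 2673664%:R*W^+7*K^+12 +
  8857837803776%:R*W^+8 + 36257648413184%:R*W^+8*K + 65916726969728%:R*W^+8*K^+2 +
  70034391256448%:R*W^+8*K^+3 + 48122234535808%:R*W^+8*K^+4 + 22335682962112%:R*W^+8*K^+5 +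
  7095726507264%:R*W^+8*K^+6 + 1528177203456%:R*W^+8*K^+7 + 215736040192%:R*W^+8*K^+8 +
  18654529472%:R*W^+8*K^+9 + 867069440%:R*W^+8*K^+10 + 16317696%:R*W^+8*K^+11 +
  49152%:R*W^+8*K^+12 + 4880287086336%:R*W^+9 + 18139808257536%:R*W^+9*K +
  29661085784704%:R*W^+9*K^+2 + 28015881267072%:R*W^+9*K^+3 + 16868134448000%:R*W^+9*K^+4 +
  6735493272576%:R*W^+9*K^+5 + 1796929252480%:R*W^+9*K^+6 + 314400872576%:R*W^+9*K^+7 +
  34358253184%:R*W^+9*K^+8 + 2129112576%:R*W^+9*K^+9 + 61450240%:R*W^+9*K^+10 +
  499712%:R*W^+9*K^+11 + 2153660205824%:R*W^+10 + 7227144062720%:R*W^+10*K +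
  10551687242240%:R*W^+10*K^+2 + 8779286297856%:R*W^+10*K^+3 + 4577960241152%:R*W^+10*K^+4 +
  1548852445248%:R*W^+10*K^+5 + 339963393536%:R*W^+10*K^+6 + 46939216320%:R*W^+10*K^+7 +
  3797020160%:R*W^+10*K^+8 + 155807488%:R*W^+10*K^+9 + 2334720%:R*W^+10*K^+10 +
  4096%:R*W^+10*K^+11 + 759720311808%:R*W^+11 + 2286194401664%:R*W^+11*K +
  2954637883520%:R*W^+11*K^+2 + 2141545973248%:R*W^+11*K^+3 + 953260021120%:R*W^+11*K^+4 +
  268054525824%:R*W^+11*K^+5 + 47127068416%:R*W^+11*K^+6 + 4932967936%:R*W^+11*K^+7 +
  276015616%:R*W^+11*K^+8 + 6512640%:R*W^+11*K^+9 + 32768%:R*W^+11*K^+10 + 212715705344%:R*W^+12 +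
  569456932224%:R*W^+12*K + 644622740608%:R*W^+12*K^+2 + 401423000896%:R*W^+12*K^+3 +
  149753781120%:R*W^+12*K^+4 + 34128288320%:R*W^+12*K^+5 + 4631913984%:R*W^+12*K^+6 +
  345974528%:R*W^+12*K^+7 + 11870208%:R*W^+12*K^+8 + 114688%:R*W^+12*K^+9 + 46649155584%:R*W^+13 +
  110037349760%:R*W^+13*K + 107675932032%:R*W^+13*K^+2 + 56597224576%:R*W^+13*K^+3 +
  17273580160%:R*W^+13*K^+4 + 3081845248%:R*W^+13*K^+5 + 305497088%:R*W^+13*K^+6 +
  14622720%:R*W^+13*K^+7 + 229376%:R*W^+13*K^+8 + 7839416320%:R*W^+14 + 16103214080%:R*W^+14*K +
  13392184832%:R*W^+14*K^+2 + 5803968768%:R*W^+14*K^+3 + 1402112512%:R*W^+14*K^+4 +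
  186049280%:R*W^+14*K^+5 + 12214272%:R*W^+14*K^+6 + 286720%:R*W^+14*K^+7 + 974456832%:R*W^+15 +
  1717625344%:R*W^+15*K + 1186613760%:R*W^+15*K^+2 + 410553856%:R*W^+15*K^+3 +
  74833408%:R*W^+15*K^+4 + 6758400%:R*W^+15*K^+5 + 229376%:R*W^+15*K^+6 + 84398080%:R*W^+16 +
  125250560%:R*W^+16*K + 69574656%:R*W^+16*K^+2 + 18351104%:R*W^+16*K^+3 + 2334720%:R*W^+16*K^+4 +
  114688%:R*W^+16*K^+5 + 4546560%:R*W^+17 + 5537792%:R*W^+17*K + 2351104%:R*W^+17*K^+2 +
  442368%:R*W^+17*K^+3 + 32768%:R*W^+17*K^+4 + 114688%:R*W^+18 + 110592%:R*W^+18*K +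
  32768%:R*W^+18*K^+2 + 4096%:R*W^+18*K^+3.

Definition turan_coef2 (W K : rat) : rat :=
  1932097536%:R + 12406099968%:R*K + 36696407040%:R*K^+2 + 66297240576%:R*K^+3 +
  81750885248%:R*K^+4 + 72799538688%:R*K^+5 + 48287231104%:R*K^+6 + 24237319680%:R*K^+7 +
  9251737344%:R*K^+8 + 2672639616%:R*K^+9 + 575166976%:R*K^+10 + 89415552%:R*K^+11 +
  9492224%:R*K^+12 + 615936%:R*K^+13 + 18432%:R*K^+14 + 14060915712%:R*W + 83134126080%:R*W*K +
  225221197824%:R*W*K^+2 + 370268141824%:R*W*K^+3 + 412214697536%:R*W*K^+4 +
  328203957568%:R*W*K^+5 + 192281126976%:R*W*K^+6 + 83926851520%:R*W*K^+7 + 27291118336%:R*W*K^+8 +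
  6529368832%:R*W*K^+9 + 1117048448%:R*W*K^+10 + 129391360%:R*W*K^+11 + 9094144%:R*W*K^+12 +
  292864%:R*W*K^+13 + 46715470848%:R*W^+2 + 253608208896%:R*W^+2*K + 627098258944%:R*W^+2*K^+2 +
  934190932096%:R*W^+2*K^+3 + 934073463488%:R*W^+2*K^+4 + 660635649792%:R*W^+2*K^+5 +
  339068395584%:R*W^+2*K^+6 + 127346954880%:R*W^+2*K^+7 + 34787152256%:R*W^+2*K^+8 +
  6760179584%:R*W^+2*K^+9 + 893084032%:R*W^+2*K^+10 + 73408128%:R*W^+2*K^+11 +
  3084288%:R*W^+2*K^+12 + 33792%:R*W^+2*K^+13 + 93964291584%:R*W^+3 + 466905799424%:R*W^+3*K +
  1049666782464%:R*W^+3*K^+2 + 1410125530496%:R*W^+3*K^+3 + 1258797494272%:R*W^+3*K^+4 +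
  784981554432%:R*W^+3*K^+5 + 349615008896%:R*W^+3*K^+6 + 111590221312%:R*W^+3*K^+7 +
  25177490560%:R*W^+3*K^+8 + 3878160128%:R*W^+3*K^+9 + 380622208%:R*W^+3*K^+10 +
  20664320%:R*W^+3*K^+11 + 431104%:R*W^+3*K^+12 + 127910482560%:R*W^+4 + 579656694656%:R*W^+4*K +
  1179525919488%:R*W^+4*K^+2 + 1421095713536%:R*W^+4*K^+3 + 1124820753408%:R*W^+4*K^+4 +
  613089019520%:R*W^+4*K^+5 + 234292201216%:R*W^+4*K^+6 + 62598843776%:R*W^+4*K^+7 +
  11420208768%:R*W^+4*K^+8 + 1350004736%:R*W^+4*K^+9 + 93107584%:R*W^+4*K^+10 +
  2957056%:R*W^+4*K^+11 + 18432%:R*W^+4*K^+12 + 124735831744%:R*W^+5 + 513390789440%:R*W^+5*K +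
  940710898752%:R*W^+5*K^+2 + 1009912606272%:R*W^+5*K^+3 + 703035029056%:R*W^+5*K^+4 +
  331450378048%:R*W^+5*K^+5 + 107190735808%:R*W^+5*K^+6 + 23520948416%:R*W^+5*K^+7 +
  3373525376%:R*W^+5*K^+8 + 292352000%:R*W^+5*K^+9 + 12965376%:R*W^+5*K^+10 +
  188416%:R*W^+5*K^+11 + 89921270720%:R*W^+6 + 334507975168%:R*W^+6*K + 548591074240%:R*W^+6*K^+2 +
  520785802752%:R*W^+6*K^+3 + 315732518720%:R*W^+6*K^+4 + 127103941248%:R*W^+6*K^+5 +
  34179267776%:R*W^+6*K^+6 + 6005269504%:R*W^+6*K^+7 + 650689792%:R*W^+6*K^+8 +
  38473472%:R*W^+6*K^+9 + 929792%:R*W^+6*K^+10 + 3072%:R*W^+6*K^+11 + 48711855488%:R*W^+7 +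
  162850076416%:R*W^+7*K + 237307234176%:R*W^+7*K^+2 + 197355670144%:R*W^+7*K^+3 +
  102933929472%:R*W^+7*K^+4 + 34800951680%:R*W^+7*K^+5 + 7599769728%:R*W^+7*K^+6 +
  1031074688%:R*W^+7*K^+7 + 79281152%:R*W^+7*K^+8 + 2805760%:R*W^+7*K^+9 + 24576%:R*W^+7*K^+10 +
  19938261760%:R*W^+8 + 59497648256%:R*W^+8*K + 76358188928%:R*W^+8*K^+2 +
  54984311552%:R*W^+8*K^+3 + 24282971520%:R*W^+8*K^+4 + 6741518848%:R*W^+8*K^+5 +
  1155446144%:R*W^+8*K^+6 + 114282240%:R*W^+8*K^+7 + 5560320%:R*W^+8*K^+8 + 86016%:R*W^+8*K^+9 +
  6139782336%:R*W^+9 + 16220538688%:R*W^+9*K + 18131649088%:R*W^+9*K^+2 +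
  11134012992%:R*W^+9*K^+3 + 4074386560%:R*W^+9*K^+4 + 898889472%:R*W^+9*K^+5 +
  114471424%:R*W^+9*K^+6 + 7414784%:R*W^+9*K^+7 + 172032%:R*W^+9*K^+8 + 1400948928%:R*W^+10 +
  3243908608%:R*W^+10*K + 3113343680%:R*W^+10*K^+2 + 1596794752%:R*W^+10*K^+3 +
  469096960%:R*W^+10*K^+4 + 78002432%:R*W^+10*K^+5 + 6654976%:R*W^+10*K^+6 + 215040%:R*W^+10*K^+7 +
  229796096%:R*W^+11 + 460529536%:R*W^+11*K + 372210688%:R*W^+11*K^+2 + 154702208%:R*W^+11*K^+3 +
  34671616%:R*W^+11*K^+4 + 3930112%:R*W^+11*K^+5 + 172032%:R*W^+11*K^+6 + 25626112%:R*W^+12 +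
  43736576%:R*W^+12*K + 28953088%:R*W^+12*K^+2 + 9294336%:R*W^+12*K^+3 + 1443840%:R*W^+12*K^+4 +
  86016%:R*W^+12*K^+5 + 1739776%:R*W^+13 + 2475008%:R*W^+13*K + 1285120%:R*W^+13*K^+2 +
  291840%:R*W^+13*K^+3 + 24576%:R*W^+13*K^+4 + 54272%:R*W^+14 + 62464%:R*W^+14*K +
  23552%:R*W^+14*K^+2 + 3072%:R*W^+14*K^+3.

Definition turan_coef3 (W K : rat) : rat :=
  44126208%:R + 224916480%:R*K + 521330688%:R*K^+2 + 727205376%:R*K^+3 + 680355584%:R*K^+4 +
  450019648%:R*K^+5 + 215891968%:R*K^+6 + 75716608%:R*K^+7 + 19272320%:R*K^+8 + 3472576%:R*K^+9 +
  420480%:R*K^+10 + 30720%:R*K^+11 + 1024%:R*K^+12 + 208604160%:R*W + 960330240%:R*W*K +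
  1995057408%:R*W*K^+2 + 2469951872%:R*W*K^+3 + 2025559552%:R*W*K^+4 + 1155751808%:R*W*K^+5 +
  468333184%:R*W*K^+6 + 134813440%:R*W*K^+7 + 27022464%:R*W*K^+8 + 3592704%:R*W*K^+9 +
  285184%:R*W*K^+10 + 10240%:R*W*K^+11 + 433617408%:R*W^+2 + 1797242880%:R*W^+2*K +
  3330901120%:R*W^+2*K^+2 + 3636629888%:R*W^+2*K^+3 + 2591609344%:R*W^+2*K^+4 +
  1260617472%:R*W^+2*K^+5 + 424390528%:R*W^+2*K^+6 + 97854528%:R*W^+2*K^+7 +
  14860032%:R*W^+2*K^+8 + 1359936%:R*W^+2*K^+9 + 60416%:R*W^+2*K^+10 + 512%:R*W^+2*K^+11 +
  523123968%:R*W^+3 + 1943275648%:R*W^+3*K + 3192947456%:R*W^+3*K^+2 + 3048393984%:R*W^+3*K^+3 +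
  1866414592%:R*W^+3*K^+4 + 761894528%:R*W^+3*K^+5 + 208353664%:R*W^+3*K^+6 +
  37187840%:R*W^+3*K^+7 + 4040576%:R*W^+3*K^+8 + 227328%:R*W^+3*K^+9 + 4096%:R*W^+3*K^+10 +
  406431360%:R*W^+4 + 1345044288%:R*W^+4*K + 1943294976%:R*W^+4*K^+2 + 1604428800%:R*W^+4*K^+3 +
  831068288%:R*W^+4*K^+4 + 278516224%:R*W^+4*K^+5 + 59856128%:R*W^+4*K^+6 + 7833024%:R*W^+4*K^+7 +
  549376%:R*W^+4*K^+8 + 14592%:R*W^+4*K^+9 + 212836608%:R*W^+5 + 622688640%:R*W^+5*K +
  782641024%:R*W^+5*K^+2 + 550434432%:R*W^+5*K^+3 + 236021376%:R*W^+5*K^+4 +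
  62827008%:R*W^+5*K^+5 + 10048768%:R*W^+5*K^+6 + 869376%:R*W^+5*K^+7 + 30208%:R*W^+5*K^+8 +
  76185600%:R*W^+6 + 195127040%:R*W^+6*K + 210327040%:R*W^+6*K^+2 + 123366464%:R*W^+6*K^+3 +
  42376960%:R*W^+6*K^+4 + 8481984%:R*W^+6*K^+5 + 908800%:R*W^+6*K^+6 + 39680%:R*W^+6*K^+7 +
  18427392%:R*W^+7 + 40800768%:R*W^+7*K + 36980096%:R*W^+7*K^+2 + 17525504%:R*W^+7*K^+3 +
  4567936%:R*W^+7*K^+4 + 618496%:R*W^+7*K^+5 + 33792%:R*W^+7*K^+6 + 2884992%:R*W^+8 +
  5432000%:R*W^+8*K + 4022400%:R*W^+8*K^+2 + 1462336%:R*W^+8*K^+3 + 260608%:R*W^+8*K^+4 +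
  18176%:R*W^+8*K^+5 + 264192%:R*W^+9 + 413696%:R*W^+9*K + 239104%:R*W^+9*K^+2 +
  60416%:R*W^+9*K^+3 + 5632%:R*W^+9*K^+4 + 10752%:R*W^+10 + 13568%:R*W^+10*K + 5632%:R*W^+10*K^+2 +
  768%:R*W^+10*K^+3.

Definition turan_coef4 (W K : rat) : rat :=
  331776%:R + 1188864%:R*K + 1880064%:R*K^+2 + 1721856%:R*K^+3 + 1006336%:R*K^+4 + 389184%:R*K^+5 +
  99584%:R*K^+6 + 16256%:R*K^+7 + 1536%:R*K^+8 + 64%:R*K^+9 + 746496%:R*W + 2377728%:R*W*K +
  3290112%:R*W*K^+2 + 2582784%:R*W*K^+3 + 1257920%:R*W*K^+4 + 389184%:R*W*K^+5 + 74688%:R*W*K^+6 +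
  8128%:R*W*K^+7 + 384%:R*W*K^+8 + 691200%:R*W^+2 + 1933056%:R*W^+2*K + 2300160%:R*W^+2*K^+2 +
  1509312%:R*W^+2*K^+3 + 589760%:R*W^+2*K^+4 + 137216%:R*W^+2*K^+5 + 17600%:R*W^+2*K^+6 +
  960%:R*W^+2*K^+7 + 337152%:R*W^+3 + 815104%:R*W^+3*K + 814656%:R*W^+3*K^+2 +
  430784%:R*W^+3*K^+3 + 127104%:R*W^+3*K^+4 + 19840%:R*W^+3*K^+5 + 1280%:R*W^+3*K^+6 +
  91392%:R*W^+4 + 187136%:R*W^+4*K + 151872%:R*W^+4*K^+2 + 61056%:R*W^+4*K^+3 +
  12160%:R*W^+4*K^+4 + 960%:R*W^+4*K^+5 + 13056%:R*W^+5 + 22016%:R*W^+5*K + 13760%:R*W^+5*K^+2 +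
  3776%:R*W^+5*K^+3 + 384%:R*W^+5*K^+4 + 768%:R*W^+6 + 1024%:R*W^+6*K + 448%:R*W^+6*K^+2 +
  64%:R*W^+6*K^+3.

Lemma turan_poly_expand (W K a s : rat) : turan_poly (W + 1) K a s =
  turan_coef0 W K * a ^+ 4 + turan_coef1 W K * a ^+ 3 * s + turan_coef2 W K * a ^+ 2 * s ^+ 2
  + turan_coef3 W K * a * s ^+ 3 + turan_coef4 W K * s ^+ 4.
Proof.
rewrite /turan_poly /turan_coef0 /turan_coef1 /turan_coef2 /turan_coef3 /turan_coef4.
by rewrite /ratio_lb_num /ratio_lb_den /lb_weight /rec_c2 /rec_c1 /rec_c0; ring.
Qed.

Lemma turan_coefs_sign (W K : rat) : 0 <= W -> 0 <= K ->
  [/\ 0 < turan_coef0 W K, 0 <= turan_coef1 W K, 0 <= turan_coef2 W K,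
       0 <= turan_coef3 W K & 0 <= turan_coef4 W K].
Proof.
move=> ge0_W ge0_K.
by split; rewrite /turan_coef0 /turan_coef1 /turan_coef2 /turan_coef3 /turan_coef4;
  [pos_poly | nonneg_poly ..].
Qed.

Lemma turan_poly_gt0 (I K a s : rat) :
  1 <= I -> 0 <= K -> 0 < a -> 0 <= s -> 0 < turan_poly I K a s.
Proof.
move=> /ge1_eq_add1[W ge0_W ->] ge0_K gt0_a ge0_s; have ge0_a := ltW gt0_a.
have [c0_gt0 c1_ge0 c2_ge0 c3_ge0 c4_ge0] := turan_coefs_sign ge0_W ge0_K.
rewrite turan_poly_expand.
apply: ltr_wpDr; first exact: mulr_ge0 c4_ge0 (exprn_ge0 _ ge0_s).
apply: ltr_wpDr; first exact: mulr_ge0 (mulr_ge0 c3_ge0 ge0_a) (exprn_ge0 _ ge0_s).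
apply: ltr_wpDr.
  exact: mulr_ge0 (mulr_ge0 c2_ge0 (exprn_ge0 _ ge0_a)) (exprn_ge0 _ ge0_s).
apply: ltr_wpDr; first exact: mulr_ge0 (mulr_ge0 c1_ge0 (exprn_ge0 _ ge0_a)) ge0_s.
exact: mulr_gt0 c0_gt0 (exprn_gt0 _ gt0_a).
Qed.

Lemma turan_diff_reparam (R : comPzRingType) (c2 c1 c0 c2' c1' c0' lo hi a b c e : R) :
  c2 * c = c1 * b - c0 * a -> c2' * e = c1' * c - c0' * b ->
  let B := lo * a + (hi * b - lo * a) in
  let C := c1 * B - c0 * hi * a in
  let E := c1' * C - c0' * c2 * B in
  B ^+ 2 * (B ^+ 2 * c2 ^+ 2 - a * C * hi * c2) * c2'
  - a ^+ 2 * hi ^+ 2 * (C ^+ 2 * c2' - B * E * c2)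
  = hi ^+ 4 * c2 ^+ 2 * c2' * (b ^+ 2 * (b ^+ 2 - a * c) - a ^+ 2 * (c ^+ 2 - b * e)).
Proof.
move=> rec rec' B C E.
have eqB : B = hi * b by rewrite /B; ring.
have eqC : C = hi * (c2 * c) by rewrite /C eqB rec; ring.
have eqE : E = hi * c2 * (c2' * e) by rewrite /E eqC eqB rec'; ring.
by rewrite eqE eqC eqB; ring.
Qed.

Lemma bm_turan_gt (i k : nat) : (0 < i)%N ->
  bm i (i + k) ^+ 2 * (bm i (i + k).+2 ^+ 2 - bm i (i + k).+1 * bm i (i + k).+3)
  < bm i (i + k).+1 ^+ 2 * (bm i (i + k).+1 ^+ 2 - bm i (i + k) * bm i (i + k).+2).
Proof.
move=> i_gt0; have gt0_i : 0 < i%:R :> rat by rewrite ltr0n.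
have ge1_i : 1 <= i%:R :> rat by rewrite ler1n.
have ge0_k := ler0n rat k.
have c2_gt0 := rec_c2_diag_gt0 (ltW gt0_i) ge0_k.
have c2'_gt0 := rec_c2_diag_gt0 (ltW gt0_i) (addr_ge0 ge0_k ler01); rewrite addrA in c2'_gt0.
have den_gt0 := ratio_lb_den_gt0 gt0_i ge0_k.
have rec := bm_rec (leq_addr k i); rewrite natrD in rec.
have rec' := bm_rec (leqW (leq_addr k i)); rewrite -natr1 natrD in rec'.
have gap_ge0 := bm_ratio_lb k i_gt0; rewrite -subr_ge0 in gap_ge0.
have := turan_poly_gt0 ge1_i ge0_k (bm_gt0 (leq_addr k i)) gap_ge0.
rewrite /turan_poly; cbv zeta.
rewrite (turan_diff_reparam (ratio_lb_num i%:R k%:R) (ratio_lb_den i%:R k%:R) rec rec').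
rewrite pmulr_rgt0 ?subr_gt0 //.
by rewrite mulr_gt0 // mulr_gt0 // exprn_gt0.
Qed.

Lemma bm0_succ (n : nat) : 2%:R * (n%:R + 1) * bm 0 n.+1 = (4%:R * n%:R + 3%:R) * bm 0 n.
Proof.
elim: n => [|n IHn]; first by have := bm_diag_succ 0; rewrite mulr0n => ->; ring.
have ge0_n := ler0n rat n.
have c2_gt0 : 0 < rec_c2 n%:R 0%:R by apply: rec_c2_gt0; lra.
move: (bm 0 n) (bm 0 n.+1) (bm 0 n.+2) IHn (bm_rec (leq0n n)) => b0 b1 b2 IHn rec.
have -> : b2 = (rec_c1 n%:R 0%:R * b1 - rec_c0 n%:R 0%:R * b0) / rec_c2 n%:R 0%:R.
  by rewrite -rec mulrC mulKf ?gt_eqF.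
have -> : b0 = 2%:R * (n%:R + 1) * b1 / (4%:R * n%:R + 3%:R).
  by rewrite IHn mulrC mulKf // gt_eqF //; lra.
move: c2_gt0; rewrite /rec_c2 /rec_c1 /rec_c0 -natr1 mulr0n => c2_gt0.
by field; repeat (apply/andP; split); apply: lt0r_neq0; lra.
Qed.

Lemma bm0_turan_lt (n : nat) :
  bm 0 n.+1 ^+ 2 * (bm 0 n.+1 ^+ 2 - bm 0 n * bm 0 n.+2) <
  bm 0 n ^+ 2 * (bm 0 n.+2 ^+ 2 - bm 0 n.+1 * bm 0 n.+3).
Proof.
have ge0_n := ler0n rat n; have gt0_a : 0 < bm 0 n by apply: bm_gt0.
have ratio (j : nat) : bm 0 j.+1 = (4%:R * j%:R + 3%:R) / (2%:R * (j%:R + 1)) * bm 0 j.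
  have ge0_j := ler0n rat j; have neq0 : 2%:R * (j%:R + 1) != 0 :> rat by rewrite gt_eqF //; lra.
  apply: (mulfI neq0); rewrite bm0_succ; move: (bm 0 j) => b.
  by field; rewrite gt_eqF //; lra.
rewrite (ratio n.+2) (ratio n.+1) (ratio n) -!natr1 -subr_lt0.
move: (bm 0 n) gt0_a => a gt0_a; set X := (X in X < 0).
have -> : X = - (a ^+ 4 * (4%:R * n%:R + 3%:R) ^+ 2 * (64%:R * n%:R ^+ 2 + 168%:R * n%:R + 88%:R))
    / ((2%:R * n%:R + 2%:R) ^+ 4 * (2%:R * n%:R + 4%:R) ^+ 2 * (2%:R * n%:R + 6%:R)).
  by rewrite /X; field; repeat (apply/andP; split); apply: lt0r_neq0; lra.
rewrite mulNr oppr_lt0; apply: divr_gt0; apply: mulr_gt0.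
- by apply: mulr_gt0; apply: exprn_gt0; lra.
- by have := mulr_ge0 ge0_n ge0_n; lra.
- by apply: mulr_gt0; apply: exprn_gt0; lra.
- lra.
Qed.

Theorem theorem1p3 :
  (forall i m : nat, (1 <= i)%N -> (i + 1 <= m)%N ->
     bm i m ^+ 2 * (bm i m ^+ 2 - bm i m.-1 * bm i m.+1) >
     bm i m.-1 ^+ 2 * (bm i m.+1 ^+ 2 - bm i m * bm i m.+2)) /\
  (forall m : nat, (1 <= m)%N ->
     bm 0 m ^+ 2 * (bm 0 m ^+ 2 - bm 0 m.-1 * bm 0 m.+1) <
     bm 0 m.-1 ^+ 2 * (bm 0 m.+1 ^+ 2 - bm 0 m * bm 0 m.+2)).
Proof.
split=> [i m i_gt0 lt_im | [//|n] _]; last exact: bm0_turan_lt.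
have [k ->] : exists k, m = (i + k).+1 by exists (m - i.+1)%N; lia.
exact: bm_turan_gt.
Qed.
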